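(* Let $n_u,N\ge1$, $n=Nn_u$, and write $\mathbf{u}\in\mathbb{R}^n$ as $\mathbf{u}=(u_1,\dots,u_N)$ with $u_\ell\in\mathbb{R}^{n_u}$. Let $\varepsilon>0$ and $$\mathcal{U}=\{\mathbf{u}\in\mathbb{R}^n:\ \|u_\ell\|_2^2\le\varepsilon,\ \ell=1,\dots,N\}.$$ Let $\mathcal{P}$ be a finite index set of pairs $(i,j)$, and for each $(i,j)\in\mathcal{P}$ let $H^{[ij]}\in\mathbb{R}^{n\times n}$ be a nonzero symmetric positive semidefinite matrix, $c^{[ij]}\in\mathbb{R}^n$ in the column space of $H^{[ij]}$, $h^{[ij]}\in\mathbb{R}$, $w_{ij}\ge0$. Define $q_{ij}(\mathbf{z})=\mathbf{z}^\top H^{[ij]}\mathbf{z}+(c^{[ij]})^\top\mathbf{z}+\tfrac14(c^{[ij]})^\top (H^{[ij]})^{+}c^{[ij]}$, $D_{ij}=\{\mathbf{z}: q_{ij}(\mathbf{z})\le\tfrac12\}$, and $F(\mathbf{u})=\sum_{(i,j)\in\mathcal{P}}w_{ij}\exp(-\mathbf{u}^\top H^{[ij]}\mathbf{u}-(c^{[ij]})^\top\mathbf{u}-h^{[ij]})$. Suppose that for each $(i,j)\in\mathcal{P}$, $0\in D_{ij}$, and let $\mathbf{z}^*_{ij}$ be a minimizer of $\mathbf{z}^\top\mathbf{z}$ subject to $q_{ij}(\mathbf{z})=\tfrac12$ (such a minimizer exists). Then: (i) for each $(i,j)$, every $\mathbf{u}$ with $\|\mathbf{u}\|_2\le\|\mathbf{z}^*_{ij}\|_2$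 belongs to $D_{ij}$; (ii) if $\sqrt{\varepsilon N}\le\|\mathbf{z}^*_{ij}\|_2$ for every $(i,j)\in\mathcal{P}$, then $\mathcal{U}\subseteq D_{ij}$ for all $(i,j)$ and $F$ is concave on $\mathcal{U}$.
   Context: $(H)^{+}$ denotes the Moore–Penrose pseudoinverse. In the application, $F$ is the weighted sum of Bhattacharyya coefficients bounding the predicted misdiagnosis probability, with weights $w_{ij}=\sqrt{P_k(M^{[i]})P_k(M^{[j]})}$, and $\mathcal{U}$ is an input energy constraint set over a horizon of length $N$. *)

From HB Require Import structures.
From mathcomp Require Import all_boot all_order all_algebra.
From mathcomp Require Import reals exp.
From mathcomp Require Import all_classical all_reals all_analysis.
Set Implicit Arguments.
Unset Strict Implicit.
Unset Printing Implicit Defensive.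
Import Order.TTheory GRing.Theory Num.Theory.
Local Open Scope ring_scope.

Definition sc (R : pzRingType) (A : 'M[R]_1) : R := A 0 0.

Definition qform (R : pzRingType) n (H : 'M[R]_n) (z : 'cV[R]_n) : R :=
  sc (z^T *m H *m z).

Definition dotv (R : pzRingType) n (a b : 'cV[R]_n) : R := sc (a^T *m b).

Definition norm2 (R : rcfType) n (z : 'cV[R]_n) : R := Num.sqrt (dotv z z).

Definition is_sym_psd (R : realFieldType) n (H : 'M[R]_n) : Prop :=
  H^T = H /\ forall z : 'cV[R]_n, 0 <= qform H z.

(* Moore-Penrose pseudoinverse (the four Penrose conditions, which
   characterise it uniquely) *)
Definition is_MP_pinv (R : pzRingType) n (H P : 'M[R]_n) : Prop :=
  [/\ H *m P *m H = H, P *m H *m P = P,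
      (H *m P)^T = H *m P & (P *m H)^T = P *m H].

Definition qfun (R : fieldType) n (H Hp : 'M[R]_n) (c z : 'cV[R]_n) : R :=
  qform H z + dotv c z + 4^-1 * qform Hp c.

Definition blk (R : Type) (N nu : nat) (u : 'cV[R]_(N * nu)) (l : 'I_N)
  : 'cV[R]_nu := \col_k u (mxvec_index l k) 0.

Definition Uset (R : rcfType) (N nu : nat) (eps : R) (u : 'cV[R]_(N * nu))
  : Prop := forall l : 'I_N, dotv (blk u l) (blk u l) <= eps.

Definition concave_on (R : realFieldType) n (S : 'cV[R]_n -> Prop)
  (f : 'cV[R]_n -> R) : Prop :=
  forall u v, S u -> S v -> forall t : R, 0 <= t <= 1 ->
    t * f u + (1 - t) * f v <= f (t *: u + (1 - t) *: v).

Definition Ffun (R : realType) (I : finType) n (w h : I -> R)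
  (H : I -> 'M[R]_n) (c : I -> 'cV[R]_n) (u : 'cV[R]_n) : R :=
  \sum_(k : I) w k * expR (- qform (H k) u - dotv (c k) u - h k).

From HB Require Import structures.
From mathcomp Require Import all_boot all_order all_algebra.
From mathcomp Require Import reals exp.
From mathcomp Require Import all_classical all_reals all_analysis.
From mathcomp Require Import ring lra.
Import Order.TTheory GRing.Theory Num.Theory numFieldNormedType.Exports.
Local Open Scope ring_scope.

(* Completing the square, q(z) = (z + H^+ c / 2)^T H (z + H^+ c / 2), so q is
   nonnegative and, along any line, a quadratic polynomial of nonnegative leading
   coefficient.  If |u| <= |z*| but q(u) > 1/2 >= q(0), the intermediate value
   theorem on the segment [0, u] produces a point s u of the level set {q = 1/2}
   with s < 1, contradicting the minimality of |z*|.  The energy constraint gives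
   |u|^2 <= eps N on U, so U lies in every D_ij.  On a segment of D_ij, q is a
   nonnegative quadratic a t^2 + b t + g bounded by 1/2, so exp(-q) is concave
   there, and F is a nonnegative combination of such functions. *)

Section QuadraticPolynomials.
Context {R : realType}.
Implicit Types a b g s t : R.
Local Open Scope classical_set_scope.

Lemma nonneg_quadratic_discriminant a b g : 0 <= a ->
  (forall s, 0 <= a * s ^+ 2 + b * s + g) -> b ^+ 2 <= 4 * a * g.
Proof.
move=> a_ge0 p_ge0; have [a0|a_neq0] := eqVneq a 0.
  subst a; have [->|b_neq0] := eqVneq b 0; first by rewrite expr0n /= mulr0 mul0r.
  have := p_ge0 (- (`|g| + 1) / b).
  rewrite mul0r add0r mulrCA divff // mulr1.
  have := ler_norm g; lra.
have a_gt0 : 0 < a by rewrite lt_neqAle eq_sym a_neq0.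
have := p_ge0 (- b / (2 * a)).
have -> : a * (- b / (2 * a)) ^+ 2 + b * (- b / (2 * a)) + g
    = g - b ^+ 2 / (4 * a) by field; rewrite a_neq0.
rewrite subr_ge0 ler_pdivrMr; lra.
Qed.

Lemma quadratic_ivt a b g t : 0 <= t -> g <= 2^-1 ->
  2^-1 <= a * t ^+ 2 + b * t + g ->
  exists2 s, 0 <= s <= t & a * s ^+ 2 + b * s + g = 2^-1.
Proof.
move=> t_ge0 g_le p_ge.
pose p : {poly R} := a *: 'X^2 + b *: 'X + g%:P.
have pE s : p.[s] = a * s ^+ 2 + b * s + g by rewrite !hornerE.
have p_cont : {within `[0, t], continuous (horner p)}.
  by apply: continuous_subspaceT => x; exact: continuous_horner.
have [|s s_in ps] := @IVT R (horner p) 0 t 2^-1 t_ge0 p_cont.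
  by rewrite !pE expr0n /= !mulr0 !add0r ge_min g_le le_max p_ge orbT.
by exists s; [rewrite in_itv in s_in | rewrite -pE].
Qed.

(* The second derivative of exp(-p) is exp(-p) ((p')^2 - p''), and
   (p')^2 = 4 a p - (4 a g - b^2) <= 4 a p <= 2 a = p'' while p <= 1/2. *)
Lemma expR_neg_quadratic_concave a b g t : 0 <= a ->
  (forall s, 0 <= a * s ^+ 2 + b * s + g) ->
  g <= 2^-1 -> a + b + g <= 2^-1 -> 0 <= t <= 1 ->
  t * expR (- (a + b + g)) + (1 - t) * expR (- g)
    <= expR (- (a * t ^+ 2 + b * t + g)).
Proof.
move=> a_ge0 p_ge0 p0_le p1_le t01.
have disc := nonneg_quadratic_discriminant a b g a_ge0 p_ge0.
pose q : {poly R} := - (a *: 'X^2 + b *: 'X + g%:P).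
have qE s : q.[s] = - (a * s ^+ 2 + b * s + g) by rewrite !hornerE.
have q'E s : q^`().[s] = - (2 * a * s + b).
  by rewrite !poly.derivE !hornerE /=; ring.
have q''E s : q^`()^`().[s] = - (2 * a).
  by rewrite !poly.derivE !hornerE /=; ring.
pose E := expR \o horner q.
have dE (x : R) : is_derive x 1 E (expR q.[x] * q^`().[x]) by exact: is_derive1_comp.
pose f : R -> R^o := - E.
have df (x : R) : is_derive x 1 f (- (E x * q^`().[x])) by exact: is_deriveN.
have Df : 'D_1 f = fun x => - (E x * q^`().[x]).
  by apply/funext => x; have [_ ->] := df x.
have ddf (x : R) : is_derive x 1 ('D_1 f)
    (- (E x * q^`()^`().[x] + q^`().[x] * (E x * q^`().[x]))).
  by rewrite Df; apply: is_deriveN.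
have f_cont x : {for x, continuous f}.
  by apply/differentiable_continuous/derivable1_diffP; case: (df x).
have f''_ge0 x : 0 < x < 1 -> 0 <= 'D_1 ('D_1 f) x.
  move=> /andP[x_gt0 x_lt1]; have [_ ->] := ddf x.
  rewrite q''E q'E /E /=.
  have Ex_gt0 := expR_gt0 q.[x].
  have px_le : a * x ^+ 2 + b * x + g <= 2^-1.
    have : a * x ^+ 2 <= a * x by rewrite ler_wpM2l // expr2 ger_pMl //; lra.
    nra.
  have : (2 * a * x + b) ^+ 2 <= 2 * a by nra.
  nra.
have t1_ge0 : 0 <= 1 - t by lra.
have t1_le1 : 1 - t <= 1 by lra.
have f_der : {in `]0, 1[%R, forall x, derivable f x 1} by move=> x _; case: (df x).
have f'_der : {in `]0, 1[%R, forall x, derivable ('D_1 f) x 1}.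
  by move=> x _; case: (ddf x).
have := @second_derivative_convex R f 0 1 f''_ge0
  (cvg_at_left_filter (f_cont 1)) (cvg_at_right_filter (f_cont 0)) f_der f'_der
  (Itv01 t1_ge0 t1_le1) ler01.
have fE s : f s = - expR (- (a * s ^+ 2 + b * s + g)) by rewrite -qE.
rewrite !convRE /= !fE /unstable.onem.
have -> : 1 - (1 - t) = t by ring.
have -> : (1 - t) * 0 + t * 1 = t by ring.
rewrite expr0n expr1n /= !mulr0 !mulr1 !addr0 add0r.
lra.
Qed.
End QuadraticPolynomials.

Section QuadraticForms.
Context {R : realFieldType} {n : nat}.
Implicit Types (H : 'M[R]_n) (x y z : 'cV[R]_n).

Definition bform H x y := sc (x^T *m H *m y).

Lemma scD (A B : 'M[R]_1) : sc (A + B) = sc A + sc B.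
Proof. by rewrite /sc mxE. Qed.

Lemma scZ a (A : 'M[R]_1) : sc (a *: A) = a * sc A.
Proof. by rewrite /sc mxE. Qed.

Lemma scT (A : 'M[R]_1) : sc A^T = sc A.
Proof. by rewrite /sc mxE. Qed.

Lemma bformDl H x y z : bform H (x + y) z = bform H x z + bform H y z.
Proof. by rewrite /bform linearD /= !mulmxDl scD. Qed.

Lemma bformDr H x y z : bform H z (x + y) = bform H z x + bform H z y.
Proof. by rewrite /bform !mulmxDr scD. Qed.

Lemma bformZl H a x y : bform H (a *: x) y = a * bform H x y.
Proof. by rewrite /bform linearZ /= -!scalemxAl scZ. Qed.

Lemma bformZr H a x y : bform H x (a *: y) = a * bform H x y.
Proof. by rewrite /bform -!scalemxAr scZ. Qed.

Lemma bformC H x y : H^T = H -> bform H x y = bform H y x.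
Proof. by move=> HT; rewrite /bform -scT !trmx_mul trmxK HT mulmxA. Qed.

Lemma bform_delta H i j : bform H (delta_mx i 0) (delta_mx j 0) = H i j.
Proof. by rewrite /bform trmx_delta -rowE -colE /sc !mxE. Qed.

Lemma qformD H x y : H^T = H ->
  qform H (x + y) = qform H x + qform H y + 2 * bform H x y.
Proof.
move=> HT; rewrite /qform -!/(bform _ _ _) bformDl !bformDr (bformC H y x HT).
ring.
Qed.

Lemma qformZ H a x : qform H (a *: x) = a ^+ 2 * qform H x.
Proof. by rewrite /qform -!/(bform _ _ _) bformZl bformZr; ring. Qed.

Lemma qform0 H : qform H 0 = 0.
Proof. by rewrite -(scale0r 0) qformZ expr0n mul0r. Qed.

Lemma dotvDr x y z : dotv z (x + y) = dotv z x + dotv z y.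
Proof. by rewrite /dotv mulmxDr scD. Qed.

Lemma dotvZr a x z : dotv z (a *: x) = a * dotv z x.
Proof. by rewrite /dotv -scalemxAr scZ. Qed.

Lemma dotv0r z : dotv z 0 = 0.
Proof. by rewrite -(scale0r 0) dotvZr mul0r. Qed.

Lemma dotvC x y : dotv x y = dotv y x.
Proof. by rewrite /dotv -scT trmx_mul trmxK. Qed.

Lemma dotvE x y : dotv x y = \sum_i x i 0 * y i 0.
Proof. by rewrite /dotv /sc mxE; apply: eq_bigr => i _; rewrite mxE. Qed.

Lemma dotvvZ a x : dotv (a *: x) (a *: x) = a ^+ 2 * dotv x x.
Proof. by rewrite dotvZr dotvC dotvZr; ring. Qed.

Lemma dotvv_ge0 x : 0 <= dotv x x.
Proof. by rewrite dotvE sumr_ge0 // => i _; rewrite -expr2 sqr_ge0. Qed.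

Lemma sqr_coord_le_dotvv x i : x i 0 ^+ 2 <= dotv x x.
Proof.
rewrite dotvE (bigD1 i) //= -expr2 lerDl.
by apply: sumr_ge0 => j _; rewrite -expr2 sqr_ge0.
Qed.

Lemma dotvv_eq0 x : (dotv x x == 0) = (x == 0).
Proof.
apply/idP/eqP => [|->]; last by rewrite dotv0r.
rewrite dotvE psumr_eq0 => [/allP x0|i _]; last by rewrite -expr2 sqr_ge0.
apply/matrixP => i j; rewrite ord1 mxE.
by have /implyP/(_ isT) := x0 i (mem_index_enum i); rewrite mulf_eq0 orbb => /eqP.
Qed.

Lemma bformE H x y : bform H x y = \sum_j \sum_i x i 0 * H i j * y j 0.
Proof.
rewrite /bform /sc mxE; apply: eq_bigr => j _; rewrite mxE big_distrl /=.
by apply: eq_bigr => i _; rewrite !mxE.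
Qed.

Lemma psd_neq0_qform_gt0 H : H != 0 -> is_sym_psd H -> exists v, 0 < qform H v.
Proof.
move=> H_neq0 [HT H_psd]; apply/not_existsP => qH_le0.
have qH0 v : qform H v = 0.
  by apply/eqP; rewrite eq_le H_psd andbT leNgt; apply/negP/qH_le0.
move/eqP: H_neq0; apply; apply/matrixP => i j; rewrite mxE -bform_delta.
by have := qformD H (delta_mx i 0) (delta_mx j 0) HT; rewrite !qH0; lra.
Qed.

End QuadraticForms.

Section QuadraticFunction.
Context {R : realFieldType} {n : nat}.
Variables (H Hp : 'M[R]_n) (c : 'cV[R]_n).
Implicit Types (u v w z : 'cV[R]_n) (s : R).

Lemma qfun_scale u s :
  qfun H Hp c (s *: u) = qform H u * s ^+ 2 + dotv c u * s + qfun H Hp c 0.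
Proof. by rewrite /qfun qformZ dotvZr qform0 dotv0r; ring. Qed.

Hypothesis HT : H^T = H.

Lemma qfun_line v w s : qfun H Hp c (v + s *: w) =
  qform H w * s ^+ 2 + (2 * bform H v w + dotv c w) * s + qfun H Hp c v.
Proof. by rewrite /qfun qformD // qformZ bformZr dotvDr dotvZr; ring. Qed.

Lemma qfun_shift z : H *m Hp *m H = H -> (exists d, c = H *m d) ->
  qfun H Hp c z = qform H (z + 2^-1 *: (Hp *m c)).
Proof.
move=> HHpH [d ->]; set c' := H *m d.
have HHpc : H *m (Hp *m c') = c' by rewrite !mulmxA HHpH.
have bformE' : bform H z (Hp *m c') = dotv c' z.
  by rewrite /bform -mulmxA HHpc dotvC.
have qformE' : qform H (Hp *m c') = qform Hp c'.
  by rewrite /qform -mulmxA HHpc -/(dotv _ c') dotvC /dotv mulmxA.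
by rewrite qformD // qformZ bformZr bformE' qformE' /qfun; field.
Qed.

End QuadraticFunction.

Section CoordinateContinuity.
Context {R : realFieldType} {n : nat}.

Lemma continuous_trmx_coord i : continuous (fun r : 'rV[R]_n => r^T i 0).
Proof.
have -> : (fun r : 'rV[R]_n => r^T i 0) = fun r => r 0 i.
  by apply/funext => r; rewrite mxE.
exact: coord_continuous.
Qed.

Lemma continuous_dotv_trmx (c : 'cV[R]_n) :
  continuous (fun r : 'rV[R]_n => dotv c r^T).
Proof.
have -> : (fun r : 'rV[R]_n => dotv c r^T) = fun r => \sum_i c i 0 * r^T i 0.
  by apply/funext => r; rewrite dotvE.
apply: continuous_big => [|i _ r]; first exact: add_continuous.
apply: (continuousM (s := fun=> c i 0) (t := fun r => r^T i 0)).
  exact: cst_continuous.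
exact: continuous_trmx_coord.
Qed.

Lemma continuous_qform_trmx (H : 'M[R]_n) :
  continuous (fun r : 'rV[R]_n => qform H r^T).
Proof.
have -> : (fun r : 'rV[R]_n => qform H r^T) =
    fun r => \sum_j \sum_i r^T i 0 * H i j * r^T j 0.
  by apply/funext => r; rewrite -bformE.
apply: continuous_big => [|j _]; first exact: add_continuous.
apply: continuous_big => [|i _ r]; first exact: add_continuous.
apply: (continuousM (t := fun r => r^T j 0)).
  apply: (continuousM (s := fun r => r^T i 0) (t := fun=> H i j)).
    exact: continuous_trmx_coord.
  exact: cst_continuous.
exact: continuous_trmx_coord.
Qed.

Lemma continuous_qfun_trmx (H Hp : 'M[R]_n) (c : 'cV[R]_n) :
  continuous (fun r : 'rV[R]_n => qfun H Hp c r^T).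
Proof.
move=> r; apply: (continuousD (f := fun r => qform H r^T + dotv c r^T)).
  exact: continuousD (continuous_qform_trmx H r) (continuous_dotv_trmx c r).
exact: cst_continuous.
Qed.

End CoordinateContinuity.

Section MinimumNormPoint.
Context {R : realType} {n : nat}.
Local Open Scope classical_set_scope.

(* Minimise [dotv z z] over the compact set [{z | f z = a, dotv z z <= dotv z0 z0}],
   working with row vectors, on which the library proves Heine-Borel. *)
Lemma exists_min_dotv_level (f : 'cV[R]_n -> R) a z0 :
  continuous (fun r : 'rV[R]_n => f r^T) -> f z0 = a ->
  exists z, f z = a /\ forall z', f z' = a -> dotv z z <= dotv z' z'.
Proof.
move=> f_cont fz0; set D := dotv z0 z0; have D_ge0 : 0 <= D := dotvv_ge0 z0.
pose A := (fun r : 'rV[R]_n => f r^T) @^-1` [set x | x = a]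
  `&` (fun r : 'rV[R]_n => dotv r^T r^T) @^-1` [set x | x <= D].
have dotv_cont : continuous (fun r : 'rV[R]_n => dotv r^T r^T).
  have -> : (fun r : 'rV[R]_n => dotv r^T r^T) = fun r => qform 1%:M r^T.
    by apply/funext => r; rewrite /qform mulmx1.
  exact: continuous_qform_trmx.
have A_closed : closed A.
  apply: closedI; apply: preimage_closed.
  - by move=> r _; exact: f_cont.
  - exact: closed_eq.
  - by move=> r _; exact: dotv_cont.
  - exact: closed_le.
have A_bounded : bounded_set A.
  exists (D + 1); split; first exact: num_real.
  move=> M DM r [_ rD]; rewrite /= (_ : `|r| = mx_norm r) // mx_normrE.
  apply: bigmax_le => [|[i j] _]; first lra.
  rewrite (ord1 i) /=.
  have rj_le : `|r 0 j| ^+ 2 <= D.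
    rewrite real_normK ?num_real //; apply: le_trans rD.
    by have := sqr_coord_le_dotvv r^T j; rewrite mxE.
  have := sqr_ge0 (`|r 0 j| - 1); nra.
have A_ne0 : A !=set0 by exists z0^T; rewrite /A /= trmxK.
have [r Ar r_min] := EVT_min_rV A_ne0 (bounded_closed_compact A_bounded A_closed)
  (continuous_subspaceT (fun r => dotv_cont r)).
move: Ar; rewrite inE => -[fr rD].
exists r^T; split => // z' fz'.
have [z'_le|/ltW z'_gt] := lerP (dotv z' z') D; last exact: le_trans rD z'_gt.
by have := r_min z'^T; rewrite trmxK; apply; rewrite inE /A /= trmxK.
Qed.

End MinimumNormPoint.

Section LevelSet.
Context {R : realType} {n : nat}.
Variables (H Hp : 'M[R]_n) (c : 'cV[R]_n).
Local Notation q := (qfun H Hp c).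

Lemma qfun_level_exists : H != 0 -> is_sym_psd H -> q 0 <= 2^-1 ->
  exists z, q z = 2^-1.
Proof.
move=> H_neq0 H_psd q0_le.
have [v a_gt0] := psd_neq0_qform_gt0 H H_neq0 H_psd.
set a := qform H v in a_gt0 *; set b := dotv c v; set g := q 0.
pose t := (`|b| + `|g| + 1) / a + 1.
have at_E : a * t = `|b| + `|g| + 1 + a.
  by rewrite /t mulrDr mulrCA divff ?mulr1 // gt_eqF.
have t_ge1 : 1 <= t by rewrite /t lerDr divr_ge0 // ltW.
have t_ge0 : 0 <= t by lra.
have [|s _ qs] := quadratic_ivt a b g t t_ge0 q0_le.
  have Nb_le : - b <= `|b| by rewrite -normrN ler_norm.
  have Ng_le : - g <= `|g| by rewrite -normrN ler_norm.
  have bt_ge0 : 0 <= (`|b| + b) * t by rewrite mulr_ge0 //; lra.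
  have : `|g| + 1 + a <= (`|g| + 1 + a) * t.
    by rewrite ler_pMr //; have := normr_ge0 g; lra.
  rewrite expr2 mulrA at_E; nra.
by exists (s *: v); rewrite qfun_scale.
Qed.

Lemma qfun_le_half_in_min_ball (zs u : 'cV[R]_n) : q 0 <= 2^-1 ->
  (forall z', q z' = 2^-1 -> dotv zs zs <= dotv z' z') ->
  norm2 u <= norm2 zs -> q u <= 2^-1.
Proof.
move=> q0_le zs_min; rewrite /norm2 ler_sqrt ?dotvv_ge0 // => u_le.
rewrite leNgt; apply/negP => qu_gt.
have [s /andP[s_ge0 s_le1] qsu] : exists2 s, 0 <= s <= 1 &
    qform H u * s ^+ 2 + dotv c u * s + q 0 = 2^-1.
  by apply: quadratic_ivt => //; rewrite -qfun_scale scale1r ltW.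
rewrite -qfun_scale in qsu.
have := zs_min _ qsu; rewrite dotvvZ => zs_le.
have u_ge0 := dotvv_ge0 u.
have [s1|s_neq1] := eqVneq s 1.
  by move: qu_gt; rewrite -qsu s1 scale1r ltxx.
have s_lt1 : s < 1 by rewrite lt_neqAle s_neq1.
have s2_lt1 : s ^+ 2 < 1 by rewrite expr2; nra.
have /eqP : dotv u u = 0 by nra.
by rewrite dotvv_eq0 => /eqP u0; move: qu_gt; rewrite u0 ltNge q0_le.
Qed.

End LevelSet.

Section BlockConstraints.
Context {R : rcfType} {N nu : nat}.

Lemma dotvv_blk (u : 'cV[R]_(N * nu)) :
  dotv u u = \sum_l dotv (blk u l) (blk u l).
Proof.
rewrite dotvE (reindex (uncurry (@mxvec_index N nu))) /=; last first.
  have [g mxvecK mxvecVK] := curry_mxvec_bij N nu.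
  by exists g => [p _|k _]; [exact: mxvecK | exact: mxvecVK].
rewrite (eq_bigr (fun p => u (mxvec_index p.1 p.2) 0 * u (mxvec_index p.1 p.2) 0));
  last by case.
rewrite -(pair_bigA _ (fun l k => u (mxvec_index l k) 0 * u (mxvec_index l k) 0)).
by apply: eq_bigr => l _; rewrite dotvE; apply: eq_bigr => k _; rewrite !mxE.
Qed.

Lemma Uset_dotvv_le eps (u : 'cV[R]_(N * nu)) :
  Uset eps u -> dotv u u <= eps * N%:R.
Proof.
move=> u_in; rewrite dotvv_blk.
apply: le_trans (ler_sum _ (fun l _ => u_in l)) _.
by rewrite sumr_const card_ord mulr_natr.
Qed.

End BlockConstraints.

Section Concavity.
Context {R : realType} {n : nat}.
Implicit Types (S T : 'cV[R]_n -> Prop).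

Lemma concave_onS S T f : (forall u, S u -> T u) -> concave_on T f -> concave_on S f.
Proof. by move=> ST f_conc u v /ST Tu /ST Tv; exact: f_conc. Qed.

Lemma concave_on_sum (I : finType) S (w : I -> R) (f : I -> 'cV[R]_n -> R) :
  (forall k, 0 <= w k) -> (forall k, concave_on S (f k)) ->
  concave_on S (fun u => \sum_k w k * f k u).
Proof.
move=> w_ge0 f_conc u v Su Sv t t01.
rewrite !mulr_sumr -big_split /=; apply: ler_sum => k _.
rewrite mulrCA [(1 - t) * _]mulrCA -mulrDr.
by apply: ler_wpM2l; [exact: w_ge0 | exact: f_conc].
Qed.

(* [hh] and the constant term of [qfun] only contribute a factor [expR K]. *)
Lemma expR_qfun_concave (H Hp : 'M[R]_n) (c : 'cV[R]_n) (hh : R) :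
  is_sym_psd H -> H *m Hp *m H = H -> (exists d, c = H *m d) ->
  concave_on (fun u => qfun H Hp c u <= 2^-1)
    (fun u => expR (- qform H u - dotv c u - hh)).
Proof.
move=> [HT H_psd] HHpH c_range u v qu_le qv_le t t01.
set K := 4^-1 * qform Hp c - hh.
have expE z : expR (- qform H z - dotv c z - hh) = expR (- qfun H Hp c z) * expR K.
  by rewrite -expRD /K /qfun; congr expR; ring.
rewrite !expE !mulrA -mulrDl ler_pM2r ?expR_gt0 //.
set w := u - v.
have -> : t *: u + (1 - t) *: v = v + t *: w.
  by apply/matrixP => i j; rewrite !mxE; ring.
have uE : u = v + 1 *: w by rewrite scale1r /w addrC subrK.
rewrite uE !qfun_line // in qu_le *.
rewrite !expr1n !mulr1 in qu_le *.
apply: expR_neg_quadratic_concave => //.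
move=> s; have := qfun_line H Hp c HT v w s.
by rewrite qfun_shift // => <-; apply: H_psd.
Qed.

End Concavity.

Theorem mainTheorem3 (R : realType) (nu N : nat) (I : finType)
  (eps : R) (H Hp : I -> 'M[R]_(N * nu)) (c : I -> 'cV[R]_(N * nu))
  (h w : I -> R) :
  (0 < nu)%N -> (0 < N)%N -> 0 < eps ->
  (forall k, H k != 0) ->
  (forall k, is_sym_psd (H k)) ->
  (forall k, is_MP_pinv (H k) (Hp k)) ->
  (forall k, exists d, c k = H k *m d) ->
  (forall k, 0 <= w k) ->
  (forall k, qfun (H k) (Hp k) (c k) 0 <= 2^-1) ->
  (forall k, exists z, qfun (H k) (Hp k) (c k) z = 2^-1 /\
     forall z', qfun (H k) (Hp k) (c k) z' = 2^-1 -> dotv z z <= dotv z' z')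
  /\
  forall zs : I -> 'cV[R]_(N * nu),
    (forall k, qfun (H k) (Hp k) (c k) (zs k) = 2^-1 /\
       forall z', qfun (H k) (Hp k) (c k) z' = 2^-1 ->
         dotv (zs k) (zs k) <= dotv z' z') ->
    (forall k u, norm2 u <= norm2 (zs k) ->
       qfun (H k) (Hp k) (c k) u <= 2^-1)
    /\
    ((forall k, Num.sqrt (eps * N%:R) <= norm2 (zs k)) ->
       (forall k u, Uset eps u -> qfun (H k) (Hp k) (c k) u <= 2^-1)
       /\ concave_on (Uset eps) (Ffun w h H c)).
Proof.
move=> _ _ eps_gt0 H_neq0 H_psd H_pinv c_range w_ge0 q0_le; split.
  move=> k; have [z0 qz0] :=
    qfun_level_exists (H k) (Hp k) (c k) (H_neq0 k) (H_psd k) (q0_le k).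
  exact: exists_min_dotv_level (continuous_qfun_trmx _ _ _) qz0.
move=> zs zs_min.
have ball_sub k u : norm2 u <= norm2 (zs k) -> qfun (H k) (Hp k) (c k) u <= 2^-1.
  exact: qfun_le_half_in_min_ball (H k) (Hp k) (c k) (zs k) u (q0_le k) (zs_min k).2.
split=> // zs_large.
have U_sub k u : Uset eps u -> qfun (H k) (Hp k) (c k) u <= 2^-1.
  move=> u_in; apply: ball_sub; apply: le_trans (zs_large k).
  rewrite /norm2 ler_sqrt; first exact: Uset_dotvv_le.
  by rewrite mulr_ge0 // ltW.
split=> //; apply: concave_on_sum => // k.
apply: concave_onS (U_sub k) _.
have [HHpH _ _ _] := H_pinv k.
exact: expR_qfun_concave (H_psd k) HHpH (c_range k).
Qed.
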